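(* Let $\mathbb{D}=\{z\in\mathbb{C}:|z|<1\}$ and let $z_1,z_2\in\mathbb{D}\setminus\{0\}$ be distinct. Let $z',z''$ be the two intersection points of the perpendicular bisector of the segment $[z_1,z_2]$ with the unit circle, namely \[ \{z',z''\}=\left\{\frac{z_1-z_2}{|z_1-z_2|}\left(\frac{|z_1|^2-|z_2|^2}{2|z_1-z_2|}\pm i\sqrt{1-\Big(\frac{|z_1|^2-|z_2|^2}{2|z_1-z_2|}\Big)^2}\right)\right\}. \] Then \[ b_{\mathbb{D},\infty}(z_1,z_2)=\begin{cases}\dfrac{|z_1-z_2|}{1-\min\{|z_1|,|z_2|\}}, & \text{if } |z_1|\le 1-\Big|z_2-\frac{z_1}{|z_1|}\Big| \text{ or } |z_2|\le 1-\Big|z_1-\frac{z_2}{|z_2|}\Big|,\\[2mm] \dfrac{|z_1-z_2|}{\min\{|z'-z_1|,|z''-z_1|\}}, & \text{otherwise}.\end{cases} \]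
   Context: For $z_1,z_2\in\mathbb{D}$, $b_{\mathbb{D},\infty}(z_1,z_2)=\sup_{w\in\partial\mathbb{D}}\frac{|z_1-z_2|}{\max\{|z_1-w|,|z_2-w|\}}$. *)

From Stdlib Require Import Reals.
From Coquelicot Require Export Coquelicot.
Open Scope R_scope.

Definition in_disk (z : C) : Prop := Cmod z < 1.

(* The supremum is taken with Coquelicot's least upper bound in Rbar; the set
   is nonempty and bounded above (for z1,z2 in D), so it is finite. *)
Definition b_D_inf (z1 z2 : C) : R :=
  real (Lub_Rbar (fun r : R => exists w : C, Cmod w = 1 /\
          r = Cmod (z1 - z2)%C / Rmax (Cmod (z1 - w)%C) (Cmod (z2 - w)%C))).

Definition bis_t (z1 z2 : C) : R :=
  (Cmod z1 ^ 2 - Cmod z2 ^ 2) / (2 * Cmod (z1 - z2)%C).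

Definition z_prime (z1 z2 : C) : C :=
  ((z1 - z2) / RtoC (Cmod (z1 - z2)) *
   (RtoC (bis_t z1 z2) + Ci * RtoC (sqrt (1 - bis_t z1 z2 ^ 2))))%C.

Definition z_second (z1 z2 : C) : C :=
  ((z1 - z2) / RtoC (Cmod (z1 - z2)) *
   (RtoC (bis_t z1 z2) - Ci * RtoC (sqrt (1 - bis_t z1 z2 ^ 2))))%C.

(* b_{D,oo}(z1, z2) = |z1 - z2| / M, where M is the minimum over the unit circle
   of w |-> max(|z1 - w|, |z2 - w|), and always M >= 1 - min(|z1|, |z2|).  If z2
   is within 1 - |z1| of the radial point z1/|z1| (or symmetrically), this bound
   is attained there.  Otherwise, seen from z1, the radial point z1/|z1| lies
   strictly beyond the perpendicular bisector of [z1, z2], and likewise for z2.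
   For w on z1's side of the bisector, max = |z1 - w|; on that arc the linear
   functional <z1, .>, whose maximizer z1/|z1| on the circle lies beyond the
   bisector, is largest at an endpoint z' or z'', so |z1 - w| is at least
   min(|z1 - z'|, |z1 - z''|).  The other arc is symmetric, with z2 in place of
   z1, because z' and z'' are equidistant from z1 and z2. *)

From Stdlib Require Import Reals Lra Psatz.
From Coquelicot Require Import Coquelicot.
Open Scope R_scope.

Lemma b_D_inf_eq_min_max (z1 z2 : C) (M : R) : 0 < M ->
  (forall w : C, Cmod w = 1 -> M <= Rmax (Cmod (z1 - w)%C) (Cmod (z2 - w)%C)) ->
  (exists w : C, Cmod w = 1 /\ Rmax (Cmod (z1 - w)%C) (Cmod (z2 - w)%C) = M) ->
  b_D_inf z1 z2 = Cmod (z1 - z2)%C / M.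
Proof.
  intros HM Hlow [w0 [Hw0 Hmax0]]. unfold b_D_inf.
  rewrite (is_lub_Rbar_unique _ (Finite (Cmod (z1 - z2)%C / M))); [reflexivity|].
  split.
  - intros x [w [Hw ->]]. simpl. apply Rmult_le_compat_l; [apply Cmod_ge_0|].
    apply Rinv_le_contravar; auto.
  - intros b Hb. apply Hb. exists w0. now rewrite Hmax0.
Qed.

Lemma Cmod_sub_comm (a b : C) : Cmod (a - b)%C = Cmod (b - a)%C.
Proof. replace (b - a)%C with (- (a - b))%C by ring. now rewrite Cmod_opp. Qed.

Lemma Cdiv_RtoC (z : C) (r : R) : r <> 0 -> (z / RtoC r)%C = (fst z / r, snd z / r).
Proof. intros. destruct z. apply injective_projections; simpl; field; auto. Qed.

Lemma Cmod_normalize (z : C) : z <> 0%C -> Cmod (z / RtoC (Cmod z))%C = 1.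
Proof.
  intros Hz. pose proof (proj1 (Cmod_gt_0 z) Hz) as Hpos.
  rewrite Cmod_div, Cmod_R, Rabs_pos_eq
    by (try lra; intro E; apply (f_equal fst) in E; simpl in E; lra).
  field. lra.
Qed.

Lemma Cmod_unit_pair (t s : R) : s ^ 2 = 1 - t ^ 2 -> Cmod (t, s) = 1.
Proof.
  intros Hs. unfold Cmod. simpl fst; simpl snd.
  replace (t ^ 2 + s ^ 2) with 1 by lra. apply sqrt_1.
Qed.

Definition Cdot (z w : C) : R := fst z * fst w + snd z * snd w.

Lemma Cdot_comm (z w : C) : Cdot z w = Cdot w z.
Proof. unfold Cdot. ring. Qed.

Lemma Cdot_sub_l (z1 z2 w : C) : Cdot (z1 - z2)%C w = Cdot z1 w - Cdot z2 w.
Proof. destruct z1, z2, w. unfold Cdot; simpl. ring. Qed.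

Lemma Cdot_opp_l (z w : C) : Cdot (- z)%C w = - Cdot z w.
Proof. destruct z, w. unfold Cdot; simpl. ring. Qed.

Lemma Cdot_div_RtoC (z w : C) (r : R) : r <> 0 -> Cdot z (w / RtoC r)%C = Cdot z w / r.
Proof. intros Hr. rewrite Cdiv_RtoC by auto. unfold Cdot; simpl. field. auto. Qed.

Lemma Cmod_sqr (z : C) : Cmod z ^ 2 = Cdot z z.
Proof. rewrite Cmod2_alt. unfold Cdot, Re, Im. ring. Qed.

Lemma Cmod_sub_sqr (z w : C) :
  Cmod (z - w)%C ^ 2 = Cmod z ^ 2 + Cmod w ^ 2 - 2 * Cdot z w.
Proof. rewrite !Cmod_sqr. destruct z, w. unfold Cdot; simpl. ring. Qed.

Lemma Cdot_abs_le (z w : C) : Rabs (Cdot z w) <= Cmod z * Cmod w.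
Proof.
  assert (Hsq : Cdot z w ^ 2 <= (Cmod z * Cmod w) ^ 2).
  { rewrite Rpow_mult_distr, !Cmod2_alt. destruct z as [x y], w as [a b].
    unfold Cdot, Re, Im; simpl. pose proof (pow2_ge_0 (x * b - y * a)). nra. }
  assert (Hpos : 0 <= Cmod z * Cmod w) by (apply Rmult_le_pos; apply Cmod_ge_0).
  revert Hsq Hpos. generalize (Cmod z * Cmod w). intros P Hsq Hpos.
  apply Rabs_le. split; nra.
Qed.

Lemma Cdot_mult_unit (u a b : C) : Cmod u = 1 -> Cdot (u * a)%C (u * b)%C = Cdot a b.
Proof.
  intros Hu. pose proof (Cmod2_alt u) as Hu2. rewrite Hu in Hu2. unfold Re, Im in Hu2.
  destruct u as [u1 u2], a, b. cbn [fst snd] in Hu2. unfold Cdot; simpl.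
  transitivity ((u1 ^ 2 + u2 ^ 2) * (r * r1 + r0 * r2)); [ring | rewrite <- Hu2; ring].
Qed.

Lemma Cdot_unit_mult (u a : C) : Cmod u = 1 -> Cdot u (u * a)%C = fst a.
Proof.
  intros Hu. rewrite <- (Cmult_1_r u) at 1. rewrite Cdot_mult_unit by auto.
  unfold Cdot; simpl. ring.
Qed.

Lemma dist_le_of_dot_ge (p e w : C) : Cmod e = 1 -> Cmod w = 1 ->
  Cdot p w <= Cdot p e -> Cmod (p - e)%C <= Cmod (p - w)%C.
Proof.
  intros He Hw Hdot.
  assert (Hsq : Cmod (p - e)%C ^ 2 <= Cmod (p - w)%C ^ 2)
    by (rewrite !Cmod_sub_sqr, He, Hw; lra).
  pose proof (Cmod_ge_0 (p - e)). pose proof (Cmod_ge_0 (p - w)). nra.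
Qed.

Lemma unit_arc_dot_le (A B a c t s : R) :
  A ^ 2 + B ^ 2 = 1 -> a ^ 2 + c ^ 2 = 1 -> 0 <= s -> s ^ 2 = 1 - t ^ 2 ->
  a <= t < A -> A * a + B * c <= t * A + s * B \/ A * a + B * c <= t * A - s * B.
Proof.
  intros HP HW Hs Hs2 [Hat HtA].
  (* The chord from (a, c) to (A, B) crosses the line x = t at a point (t, X) of
     the closed disk, so |X| <= s, and the dot product with (A, B) grows along it. *)
  set (l := (t - a) / (A - a)).
  assert (Ht : t = (1 - l) * a + l * A) by (unfold l; field; lra).
  assert (Hl : 0 <= l < 1) by (split; nra).
  clearbody l. set (X := (1 - l) * c + l * B).
  assert (Hdot : A * a + B * c <= 1)
    by (pose proof (pow2_ge_0 (A - a)); pose proof (pow2_ge_0 (B - c)); nra).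
  assert (Hchord : t * A + B * X = (1 - l) * (A * a + B * c) + l * (A ^ 2 + B ^ 2))
    by (rewrite Ht; unfold X; ring).
  assert (Hnorm : t ^ 2 + X ^ 2
                  = (1 - l) ^ 2 * (a ^ 2 + c ^ 2) + l ^ 2 * (A ^ 2 + B ^ 2)
                    + 2 * l * (1 - l) * (A * a + B * c))
    by (rewrite Ht; unfold X; ring).
  rewrite HP, HW in Hnorm. rewrite HP in Hchord.
  assert (HX : X ^ 2 <= s ^ 2) by (assert (0 <= l * (1 - l)) by nra; nra).
  assert (Hgain : A * a + B * c <= t * A + B * X) by nra.
  assert (HXs : - s <= X <= s) by (split; nra).
  destruct (Rle_or_lt 0 B); [left | right]; nra.
Qed.

Lemma arc_dot_le_endpoints (p w : C) (t s : R) :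
  Cmod w = 1 -> 0 <= s -> s ^ 2 = 1 - t ^ 2 -> fst w <= t -> t * Cmod p < fst p ->
  Cdot p w <= Rmax (Cdot p (t, s)) (Cdot p (t, - s)).
Proof.
  intros Hw Hs Hs2 Hwt Hpt.
  assert (Hr : 0 < Cmod p).
  { pose proof (re_le_Cmod p). pose proof (Rle_abs (fst p)). pose proof (Cmod_ge_0 p).
    unfold Re in *. nra. }
  pose proof (Cmod2_alt p) as Hp2. pose proof (Cmod2_alt w) as Hw2.
  rewrite Hw in Hw2. unfold Re, Im in *.
  revert Hpt Hr Hp2. generalize (Cmod p). intros r Hpt Hr Hp2.
  destruct p as [x y], w as [a c]. cbn [fst snd] in *. unfold Cdot; cbn [fst snd].
  assert (HP : (x / r) ^ 2 + (y / r) ^ 2 = 1).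
  { replace ((x / r) ^ 2 + (y / r) ^ 2) with ((x ^ 2 + y ^ 2) / r ^ 2) by (field; lra).
    rewrite <- Hp2. field. lra. }
  assert (HtP : t < x / r) by (apply (Rmult_lt_reg_r r); auto; field_simplify; lra).
  destruct (unit_arc_dot_le (x / r) (y / r) a c t s) as [H | H]; auto; try lra.
  - eapply Rle_trans; [| apply Rmax_l].
    apply (Rmult_le_compat_l r) in H; [| lra]. field_simplify in H; lra.
  - eapply Rle_trans; [| apply Rmax_r].
    apply (Rmult_le_compat_l r) in H; [| lra]. field_simplify in H; lra.
Qed.

Lemma dot_le_rotated_endpoints (u p w : C) (t s : R) :
  Cmod u = 1 -> Cmod w = 1 -> 0 <= s -> s ^ 2 = 1 - t ^ 2 ->
  Cdot u w <= t -> t * Cmod p < Cdot u p ->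
  Cdot p w <= Rmax (Cdot p (u * (t, s))%C) (Cdot p (u * Cconj (t, s))%C).
Proof.
  intros Hu Hw Hs Hs2 Hwt Hpt.
  assert (Huv : (u * Cconj u)%C = 1).
  { rewrite <- Cmod2_conj, Hu. apply injective_projections; simpl; ring. }
  set (P := (Cconj u * p)%C). set (W := (Cconj u * w)%C).
  assert (Ep : p = (u * P)%C) by (unfold P; rewrite Cmult_assoc, Huv; ring).
  assert (Ew : w = (u * W)%C) by (unfold W; rewrite Cmult_assoc, Huv; ring).
  clearbody P W. subst p w.
  rewrite !Cdot_mult_unit by auto.
  rewrite Cdot_unit_mult in Hwt, Hpt by auto.
  rewrite Cmod_mult, Hu, Rmult_1_l in Hw, Hpt.
  now apply arc_dot_le_endpoints.
Qed.

Lemma circle_dist_ge_rotated_endpoints (u p w : C) (t s : R) :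
  Cmod u = 1 -> Cmod w = 1 -> 0 <= s -> s ^ 2 = 1 - t ^ 2 ->
  Cdot u w <= t -> t * Cmod p < Cdot u p ->
  Rmin (Cmod (p - u * (t, s))%C) (Cmod (p - u * Cconj (t, s))%C) <= Cmod (p - w)%C.
Proof.
  intros Hu Hw Hs Hs2 Hwt Hpt.
  assert (He1 : Cmod (u * (t, s))%C = 1)
    by (rewrite Cmod_mult, Hu, Cmod_unit_pair; auto; ring).
  assert (He2 : Cmod (u * Cconj (t, s))%C = 1)
    by (rewrite Cmod_mult, Hu, Cmod_conj, Cmod_unit_pair; auto; ring).
  pose proof (dot_le_rotated_endpoints u p w t s Hu Hw Hs Hs2 Hwt Hpt) as Hmax.
  unfold Rmax in Hmax. destruct (Rle_dec _ _).
  - eapply Rle_trans; [apply Rmin_r | now apply dist_le_of_dot_ge].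
  - eapply Rle_trans; [apply Rmin_l | now apply dist_le_of_dot_ge].
Qed.

Lemma circle_dist_ge (z w : C) : Cmod w = 1 -> 1 - Cmod z <= Cmod (z - w)%C.
Proof.
  intros Hw. pose proof (Cmod_triangle (w - z)%C z) as H.
  replace (w - z + z)%C with w in H by ring. rewrite Cmod_sub_comm. lra.
Qed.

Lemma circle_max_dist_ge (z1 z2 w : C) : Cmod w = 1 ->
  1 - Rmin (Cmod z1) (Cmod z2) <= Rmax (Cmod (z1 - w)%C) (Cmod (z2 - w)%C).
Proof.
  intros Hw. pose proof (circle_dist_ge z1 w Hw). pose proof (circle_dist_ge z2 w Hw).
  unfold Rmin, Rmax. destruct (Rle_dec _ _); destruct (Rle_dec _ _); lra.
Qed.

Lemma radial_max_dist (z1 z2 : C) : z1 <> 0%C -> Cmod z1 < 1 ->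
  Cmod z1 <= 1 - Cmod (z2 - z1 / RtoC (Cmod z1))%C ->
  Rmax (Cmod (z1 - z1 / RtoC (Cmod z1))%C) (Cmod (z2 - z1 / RtoC (Cmod z1))%C)
  = 1 - Rmin (Cmod z1) (Cmod z2).
Proof.
  intros Hz Hr Hnear. pose proof (Cmod_normalize z1 Hz) as Hn.
  set (n := (z1 / RtoC (Cmod z1))%C) in *.
  assert (Hz1 : Cmod (z1 - n)%C = 1 - Cmod z1).
  { replace (z1 - n)%C with (n * RtoC (Cmod z1 - 1))%C.
    - rewrite Cmod_mult, Hn, Cmod_R, Rabs_left1 by lra. ring.
    - assert (RtoC (Cmod z1) <> 0%C)
        by (intro E; apply (f_equal fst) in E; simpl in E; apply Hz, Cmod_eq_0; auto).
      unfold n. rewrite RtoC_minus. field. auto. }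
  pose proof (circle_dist_ge z2 n Hn).
  rewrite Hz1. unfold Rmin, Rmax. destruct (Rle_dec _ _); destruct (Rle_dec _ _); lra.
Qed.

Lemma b_D_inf_radial (z1 z2 : C) : in_disk z1 -> in_disk z2 -> z1 <> 0%C -> z2 <> 0%C ->
  Cmod z1 <= 1 - Cmod (z2 - z1 / RtoC (Cmod z1))%C \/
  Cmod z2 <= 1 - Cmod (z1 - z2 / RtoC (Cmod z2))%C ->
  b_D_inf z1 z2 = Cmod (z1 - z2)%C / (1 - Rmin (Cmod z1) (Cmod z2)).
Proof.
  unfold in_disk. intros Hd1 Hd2 Hz1 Hz2 Hnear.
  apply b_D_inf_eq_min_max.
  - pose proof (Rmin_l (Cmod z1) (Cmod z2)). lra.
  - intros w Hw. now apply circle_max_dist_ge.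
  - destruct Hnear as [Hnear | Hnear].
    + exists (z1 / RtoC (Cmod z1))%C. split; [now apply Cmod_normalize|].
      now apply radial_max_dist.
    + exists (z2 / RtoC (Cmod z2))%C. split; [now apply Cmod_normalize|].
      rewrite Rmax_comm, Rmin_comm. now apply radial_max_dist.
Qed.

Lemma radial_dist_gt (z1 z2 : C) : z1 <> 0%C -> Cmod z1 <= 1 ->
  1 - Cmod z1 < Cmod (z2 - z1 / RtoC (Cmod z1))%C ->
  (Cmod z1 ^ 2 - Cmod z2 ^ 2) * Cmod z1 < 2 * Cdot (z1 - z2)%C z1.
Proof.
  intros Hz Hr1 Hfar. pose proof (proj1 (Cmod_gt_0 z1) Hz) as Hr.
  pose proof (Cmod_normalize z1 Hz) as Hn.
  assert (Hsq : (1 - Cmod z1) ^ 2 < Cmod (z2 - z1 / RtoC (Cmod z1))%C ^ 2) by nra.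
  rewrite Cmod_sub_sqr, Hn, Cdot_div_RtoC in Hsq by lra.
  rewrite Cdot_sub_l, <- Cmod_sqr, (Cdot_comm z2 z1).
  assert (Hmul : Cmod z1 * ((1 - Cmod z1) ^ 2)
                 < Cmod z1 * (Cmod z2 ^ 2 + 1 ^ 2 - 2 * (Cdot z2 z1 / Cmod z1)))
    by (apply Rmult_lt_compat_l; auto).
  rewrite (Cdot_comm z2 z1) in Hmul.
  field_simplify in Hmul; [nra | lra].
Qed.

Section Bisector.

Variables z1 z2 : C.
Hypothesis z1_in : Cmod z1 < 1.
Hypothesis z2_in : Cmod z2 < 1.
Hypothesis z1_nz : z1 <> 0%C.
Hypothesis z2_nz : z2 <> 0%C.
Hypothesis z12_neq : z1 <> z2.
Hypothesis z1_far : 1 - Cmod z1 < Cmod (z2 - z1 / RtoC (Cmod z1))%C.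
Hypothesis z2_far : 1 - Cmod z2 < Cmod (z1 - z2 / RtoC (Cmod z2))%C.

Let d := Cmod (z1 - z2)%C.
Let u := ((z1 - z2) / RtoC d)%C.
Let t := bis_t z1 z2.
Let s := sqrt (1 - t ^ 2).

Lemma diff_nz : (z1 - z2)%C <> 0%C.
Proof.
  intro E. apply z12_neq.
  replace z1 with ((z1 - z2) + z2)%C by ring. rewrite E. ring.
Qed.

Lemma dist_pos : 0 < d.
Proof. apply Cmod_gt_0, diff_nz. Qed.

Lemma u_unit : Cmod u = 1.
Proof. apply Cmod_normalize, diff_nz. Qed.

Lemma Cdot_diff (w : C) : Cdot (z1 - z2)%C w = d * Cdot u w.
Proof.
  pose proof dist_pos. unfold u.
  rewrite (Cdot_comm (_ / _)), Cdot_div_RtoC, (Cdot_comm w) by lra.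
  field. lra.
Qed.

Lemma dist_sqr_diff (w : C) :
  Cmod (z1 - w)%C ^ 2 - Cmod (z2 - w)%C ^ 2 = 2 * d * (t - Cdot u w).
Proof.
  pose proof dist_pos.
  assert (Et : 2 * d * t = Cmod z1 ^ 2 - Cmod z2 ^ 2)
    by (unfold t, bis_t; fold d; field; lra).
  rewrite !Cmod_sub_sqr.
  transitivity (Cmod z1 ^ 2 - Cmod z2 ^ 2 - 2 * Cdot (z1 - z2)%C w);
    [rewrite Cdot_sub_l; ring | rewrite Cdot_diff, <- Et; ring].
Qed.

Lemma z1_beyond_bisector : t * Cmod z1 < Cdot u z1.
Proof.
  pose proof dist_pos.
  pose proof (radial_dist_gt z1 z2 z1_nz (Rlt_le _ _ z1_in) z1_far) as Hfar.
  rewrite Cdot_diff in Hfar.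
  unfold t, bis_t. fold d. apply (Rmult_lt_reg_l (2 * d)); [lra|].
  field_simplify; lra.
Qed.

Lemma z2_beyond_bisector : Cdot u z2 < t * Cmod z2.
Proof.
  pose proof dist_pos.
  pose proof (radial_dist_gt z2 z1 z2_nz (Rlt_le _ _ z2_in) z2_far) as Hfar.
  replace (z2 - z1)%C with (- (z1 - z2))%C in Hfar by ring.
  rewrite Cdot_opp_l, Cdot_diff in Hfar.
  unfold t, bis_t. fold d. apply (Rmult_lt_reg_l (2 * d)); [lra|].
  field_simplify; lra.
Qed.

Lemma bis_t_bounds : -1 < t < 1.
Proof.
  pose proof (Cdot_abs_le u z1) as H1. pose proof (Cdot_abs_le u z2) as H2.
  rewrite u_unit, Rmult_1_l in H1, H2.
  apply Rabs_le_between in H1, H2.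
  pose proof z1_beyond_bisector. pose proof z2_beyond_bisector.
  pose proof (proj1 (Cmod_gt_0 z1) z1_nz). pose proof (proj1 (Cmod_gt_0 z2) z2_nz).
  split; nra.
Qed.

Lemma s_sqr : s ^ 2 = 1 - t ^ 2.
Proof. pose proof bis_t_bounds. apply pow2_sqrt. nra. Qed.

Lemma z_prime_eq : z_prime z1 z2 = (u * (t, s))%C.
Proof.
  unfold z_prime. fold d u t s. f_equal.
  apply injective_projections; simpl; ring.
Qed.

Lemma z_second_eq : z_second z1 z2 = (u * Cconj (t, s))%C.
Proof.
  unfold z_second. fold d u t s. f_equal.
  apply injective_projections; simpl; ring.
Qed.

Lemma endpoints_unit : Cmod (u * (t, s))%C = 1 /\ Cmod (u * Cconj (t, s))%C = 1.
Proof.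
  rewrite !Cmod_mult, Cmod_conj, u_unit, Cmod_unit_pair by exact s_sqr.
  split; ring.
Qed.

Lemma endpoint_equidistant (e : C) : Cdot u e = t -> Cmod (z2 - e)%C = Cmod (z1 - e)%C.
Proof.
  intros He. pose proof (dist_sqr_diff e) as H. rewrite He, Rminus_diag, Rmult_0_r in H.
  pose proof (Cmod_ge_0 (z1 - e)). pose proof (Cmod_ge_0 (z2 - e)). nra.
Qed.

Lemma endpoints_equidistant :
  Cmod (z2 - u * (t, s))%C = Cmod (z1 - u * (t, s))%C /\
  Cmod (z2 - u * Cconj (t, s))%C = Cmod (z1 - u * Cconj (t, s))%C.
Proof.
  split; apply endpoint_equidistant; rewrite Cdot_unit_mult by apply u_unit; reflexivity.
Qed.

Let m := Rmin (Cmod (z1 - u * (t, s))%C) (Cmod (z1 - u * Cconj (t, s))%C).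

Lemma bisector_min_le_max_dist (w : C) : Cmod w = 1 ->
  m <= Rmax (Cmod (z1 - w)%C) (Cmod (z2 - w)%C).
Proof.
  intros Hw. pose proof u_unit. pose proof (sqrt_pos (1 - t ^ 2)). pose proof s_sqr.
  destruct (Rle_or_lt (Cdot u w) t) as [Hside | Hside].
  - eapply Rle_trans; [| apply Rmax_l].
    apply circle_dist_ge_rotated_endpoints; auto using z1_beyond_bisector.
  - (* seen from z2, the frame (-u, -t) has the same endpoints in swapped order *)
    eapply Rle_trans; [| apply Rmax_r].
    unfold m. destruct endpoints_equidistant as [<- <-]. rewrite Rmin_comm.
    replace (u * Cconj (t, s))%C with (Cmult (Copp u) (- t, s))
      by (apply injective_projections; simpl; ring).
    replace (u * (t, s))%C with (Cmult (Copp u) (Cconj (- t, s)))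
      by (apply injective_projections; simpl; ring).
    apply circle_dist_ge_rotated_endpoints; auto.
    + now rewrite Cmod_opp.
    + lra.
    + rewrite Cdot_opp_l. lra.
    + rewrite Cdot_opp_l. pose proof z2_beyond_bisector. lra.
Qed.

Lemma bisector_max_dist_attained :
  exists w : C, Cmod w = 1 /\ Rmax (Cmod (z1 - w)%C) (Cmod (z2 - w)%C) = m.
Proof.
  destruct endpoints_unit as [U1 U2], endpoints_equidistant as [E1 E2]. unfold m.
  destruct (Rle_or_lt (Cmod (z1 - u * (t, s))%C) (Cmod (z1 - u * Cconj (t, s))%C)).
  - exists (u * (t, s))%C. split; auto. rewrite E1, Rmax_left, Rmin_left; lra.
  - exists (u * Cconj (t, s))%C. split; auto. rewrite E2, Rmax_left, Rmin_right; lra.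
Qed.

Lemma b_D_inf_bisector : b_D_inf z1 z2 = Cmod (z1 - z2)%C /
  Rmin (Cmod (z_prime z1 z2 - z1)%C) (Cmod (z_second z1 z2 - z1)%C).
Proof.
  rewrite z_prime_eq, z_second_eq, (Cmod_sub_comm (u * _)), (Cmod_sub_comm (u * Cconj _)).
  destruct endpoints_unit as [U1 U2].
  apply b_D_inf_eq_min_max.
  - pose proof (circle_dist_ge z1 _ U1). pose proof (circle_dist_ge z1 _ U2).
    apply Rmin_glb_lt; lra.
  - exact bisector_min_le_max_dist.
  - exact bisector_max_dist_attained.
Qed.

End Bisector.

Theorem theorem3p29 (z1 z2 : C) :
  in_disk z1 -> in_disk z2 -> z1 <> 0%C -> z2 <> 0%C -> z1 <> z2 ->
  let cond :=
    Cmod z1 <= 1 - Cmod (z2 - z1 / RtoC (Cmod z1))%C \/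
    Cmod z2 <= 1 - Cmod (z1 - z2 / RtoC (Cmod z2))%C in
  (cond -> b_D_inf z1 z2 = Cmod (z1 - z2)%C / (1 - Rmin (Cmod z1) (Cmod z2))) /\
  (~ cond -> b_D_inf z1 z2 =
     Cmod (z1 - z2)%C /
       Rmin (Cmod (z_prime z1 z2 - z1)%C) (Cmod (z_second z1 z2 - z1)%C)).
Proof.
  intros Hd1 Hd2 Hz1 Hz2 Hne cond. split.
  - now apply b_D_inf_radial.
  - intros Hfar. unfold cond, in_disk in *.
    apply b_D_inf_bisector; auto; apply Rnot_le_lt; intro; apply Hfar; [left | right]; lra.
Qed.
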